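(* Let $\mathbb{K}$ be a totally ordered field which is non-Archimedean and Cantor $\kappa$-complete for a cardinal $\kappa$. Then $\kappa\le\mathrm{card}(\mathbb{K})$.
   Context: For a cardinal $\kappa$, $\mathbb{K}$ is Cantor $\kappa$-complete if every family of fewer than $\kappa$ closed bounded intervals in $\mathbb{K}$ with the finite intersection property has non-empty intersection. Archimedean: for every $x$ there is $n\in\mathbb{N}$ with $|x|<n$. *)

(* a totally ordered field is a [realFieldType]. *)
From Stdlib Require List.
From HB Require Import structures.
From mathcomp Require Import all_boot all_order all_algebra.
Set Implicit Arguments. Unset Strict Implicit. Unset Printing Implicit Defensive.
Import Order.TTheory GRing.Theory Num.Theory.
Local Open Scope ring_scope.

(* Cardinals are represented by types; |A| <= |B| iff there is an injection. *)
Definition card_le (A B : Type) : Prop := exists f : A -> B, injective f.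
Definition card_lt (A B : Type) : Prop := card_le A B /\ ~ card_le B A.

Definition archimedean_field (K : realFieldType) : Prop :=
  forall x : K, exists n : nat, `|x| < n%:R.

Definition in_interval (K : realFieldType) (a b x : K) : Prop := a <= x /\ x <= b.

Definition fip (K : realFieldType) (I : Type) (a b : I -> K) : Prop :=
  forall s : list I, exists x : K, forall i, List.In i s -> in_interval (a i) (b i) x.

Definition cantor_complete (K : realFieldType) (kappa : Type) : Prop :=
  forall (I : Type) (a b : I -> K),
    card_lt I kappa ->
    (forall i, a i <= b i) ->
    fip a b ->
    exists x : K, forall i, in_interval (a i) (b i) x.

From mathcomp Require Import all_boot all_order all_algebra.
From mathcomp Require Import boolp classical_sets.

Set Implicit Arguments.
Unset Strict Implicit.
Unset Printing Implicit Defensive.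

Import Order.TTheory GRing.Theory Num.Theory.

(* A non-Archimedean field has infinitely large elements, and no point lies
   above every natural number and below every infinitely large element (if x
   did, so would x/2 <= x, yet x/2 would be infinitely large).  Indexing one
   interval by each t in K gives a family of |K| closed intervals, pairwise
   intersecting, that realises exactly this gap, so Cantor kappa-completeness
   forces |K| < kappa to fail; cardinal comparability (Zorn's lemma on partial
   injections) turns this into kappa <= |K|. *)

Section CardinalComparability.
Variables A B : Type.

Local Open Scope classical_set_scope.

Definition partial_injection (G : set (A * B)) :=
  forall p q, G p -> G q -> (p.1 = q.1 <-> p.2 = q.2).

Lemma partial_injection_bigcup (F : set (set (A * B))) :
  F `<=` partial_injection -> total_on F subset ->
  partial_injection (\bigcup_(G in F) G).
Proof.
move=> Finj Fchain p q [G FG Gp] [G' FG' G'q].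
have [GG'|G'G] := Fchain G G' FG FG'.
- exact: (Finj G' FG' _ _ (GG' p Gp) G'q).
- exact: (Finj G FG _ _ Gp (G'G q G'q)).
Qed.

Lemma partial_injectionU1 (G : set (A * B)) (a : A) (b : B) :
  partial_injection G -> ~ (exists b', G (a, b')) -> ~ (exists a', G (a', b)) ->
  partial_injection (G `|` [set (a, b)]).
Proof.
move=> Ginj a_free b_free p q [Gp|->] [Gq|->] //=.
- exact: Ginj.
- by case: p Gp => a' b' /= Gp; split=> [eqa|eqb]; [case: a_free|case: b_free];
    [exists b'; rewrite -eqa|exists a'; rewrite -eqb].
- by case: q Gq => a' b' /= Gq; split=> [eqa|eqb]; [case: a_free|case: b_free];
    [exists b'; rewrite eqa|exists a'; rewrite eqb].
Qed.

Lemma card_le_total : card_le A B \/ card_le B A.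
Proof.
have [G [Ginj Gmax]] := Zorn_bigcup partial_injection_bigcup.
have [Gtotal|/existsNP[a0 a0_free]] := pselect (forall a, exists b, G (a, b)).
  left; have [f Gf] := choice Gtotal; exists f => a a' eqf.
  exact/(Ginj (a, f a) (a', f a')).
have Gonto b : exists a, G (a, b).
  apply: contrapT => b_free; apply: (Gmax (G `|` [set (a0, b)])).
  - split; first exact: subsetUl.
    by move=> GU; apply: a0_free; exists b; apply: GU; right.
  - exact: partial_injectionU1.
right; have [g Gg] := choice Gonto; exists g => b b' eqg.
exact/(Ginj (g b, b) (g b', b')).
Qed.

End CardinalComparability.

Local Open Scope ring_scope.

Section InfinitelyLarge.
Variable K : realFieldType.

Definition infinitely_large (x : K) := forall n : nat, n%:R <= `|x|.

Lemma not_archimedean_infinitely_large :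
  ~ archimedean_field K -> exists H, infinitely_large H.
Proof.
move=> nonarch; apply: contrapT => /forallNP no_large; apply: nonarch => x.
have /existsNP[n /negP] := no_large x; rewrite -ltNge => ltx.
by exists n.
Qed.

Lemma finite_lt_infinitely_large (x y : K) :
  ~ infinitely_large x -> infinitely_large y -> `|x| < `|y|.
Proof.
move=> /existsNP[n /negP]; rewrite -ltNge => ltx /(_ n) ley.
exact: lt_le_trans ltx ley.
Qed.

Lemma nat_not_infinitely_large (n : nat) : ~ infinitely_large n%:R.
Proof. by move=> /(_ n.+1); rewrite normr_nat ler_nat ltnn. Qed.

Lemma no_point_between_naturals_and_infinitely_large (x : K) :
  (forall n : nat, n%:R <= x) -> ~ (forall y, infinitely_large y -> x <= `|y|).
Proof.
move=> x_large x_small.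
have x_gt0 : 0 < x by apply: lt_le_trans (x_large 1%N); rewrite ltr01.
have half_norm : `|x / 2| = x / 2 by rewrite ger0_norm // divr_ge0 // ltW.
have half_large : infinitely_large (x / 2).
  by move=> n; rewrite half_norm ler_pdivlMr // -natrM; exact: x_large.
have := x_small _ half_large.
by rewrite half_norm ler_pdivlMr // mulr_natr mulr2n gerDl leNgt x_gt0.
Qed.

End InfinitelyLarge.

Lemma fip_of_pairwise_le (K : realFieldType) (I : Type) (a b : I -> K) :
  (forall i j, a i <= b j) -> fip a b.
Proof.
move=> ab s.
have : s = [::] \/ exists x, (forall i, List.In i s -> a i <= x) /\ forall j, x <= b j.
  elim: s => [|i s IH]; [by left | right].
  case: IH => [->|[x [ax xb]]].
    by exists (a i); split=> [k [<-|[]]|j]; rewrite ?ab.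
  exists (Order.max (a i) x); split=> [k [<-|ks]|j]; last by rewrite ge_max ab xb.
    by rewrite le_max lexx.
  by rewrite le_max ax ?orbT.
case=> [->|[x [ax xb]]]; first by exists 0 => i [].
by exists x => i si; split; [exact: ax | exact: xb].
Qed.

(* Left ends run through the finite absolute values, right ends through the
   infinitely large ones; [H] only fills the unused ends. *)
Section StraddlingFamily.
Variables (K : realFieldType) (H : K).
Hypothesis H_large : infinitely_large H.

Definition straddle_lo (t : K) : K := if `[< infinitely_large t >] then 0 else `|t|.
Definition straddle_hi (t : K) : K := if `[< infinitely_large t >] then `|t| else `|H|.

Lemma straddle_lo_le_hi (t u : K) : straddle_lo t <= straddle_hi u.
Proof.
rewrite /straddle_lo /straddle_hi.
case: asboolP => [_|fin_t]; case: asboolP => [inf_u|_]; rewrite ?normr_ge0 //.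
all: exact/ltW/finite_lt_infinitely_large.
Qed.

Lemma straddle_intersection_empty (x : K) :
  ~ forall t, in_interval (straddle_lo t) (straddle_hi t) x.
Proof.
move=> x_in; apply: (@no_point_between_naturals_and_infinitely_large _ x).
- move=> n; have [+ _] := x_in n%:R; rewrite /straddle_lo.
  by case: asboolP => [/nat_not_infinitely_large|_]; rewrite ?normr_nat.
- move=> y y_large; have [_] := x_in y; rewrite /straddle_hi.
  by case: asboolP.
Qed.

End StraddlingFamily.

Theorem mainTheorem15 (K : realFieldType) (kappa : Type) :
  ~ archimedean_field K -> cantor_complete K kappa -> card_le kappa K.
Proof.
move=> nonarch complete; have [H H_large] := not_archimedean_infinitely_large nonarch.
apply: contrapT => not_kappa_le_K.
have K_lt_kappa : card_lt K kappa.
  by split=> //; case: (card_le_total kappa K).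
have [x x_in] := complete K _ _ K_lt_kappa (fun t => straddle_lo_le_hi H_large t t)
  (fip_of_pairwise_le (straddle_lo_le_hi H_large)).
exact: straddle_intersection_empty x_in.
Qed.
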